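(* In the setting below, suppose $\max_{g\in G_-}|\delta(g)|=E_k-\lfloor E_k\rfloor_2$. Then $|G_-|\ge \frac{|\mathrm{Co}_0|}{2}\bigl(\lceil E_k\rceil_2-E_k\bigr)$.
   Context: Let $\Lambda_{24}$ be the Leech lattice scaled so minimal vectors have length $2$, $\mathcal C$ its $196560$ minimal vectors, and $\mathrm{Co}_0$ the finite group of linear isometries of $\mathbb{R}^{24}$ mapping $\Lambda_{24}$ onto itself (acting transitively on $\mathcal C$). Fix an antipodal ($S=-S$) set $S\subseteq\mathcal C$ with $\langle x,y\rangle\le1$ for distinct $x,y\in S$. Let $k\ge1$, $S_1=S$, $g_1=\mathrm{id}$, and for $2\le j\le k$, $S_j=g_jS\setminus(S_1\cup\dots\cup S_{j-1})$ for some $g_j\in\mathrm{Co}_0$, with $|S_j|\ge|S|\bigl(1-\sum_{i<j}|S_i|/|\mathcal C|\bigr)$. Put $U_k=S_1\cup\dots\cup S_k$, $E_k=\mathbb{E}_g|gS\cap U_k|$ ($g$ uniform in $\mathrm{Co}_0$). $\lfloor x\rfloor_2$ (resp. $\lceil x\rceil_2$) is the greatest even integer $\le x$ (resp. least even integer $\ge x$). $\delta(g)=|gS\cap U_k|-E_k$, $G_-=\{g:\delta(g)<0\}$. *)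

From HB Require Import structures.
From mathcomp Require Import all_boot all_order all_algebra.
From mathcomp Require Import finmap.
From mathcomp Require Import all_classical all_reals.
Set Implicit Arguments. Unset Strict Implicit. Unset Printing Implicit Defensive.
Import Order.TTheory GRing.Theory Num.Theory.
Local Open Scope classical_set_scope.
Local Open Scope ring_scope.

(* Coefficients (degree 0..11) of g(x) = 1 + x^2 + x^4 + x^5 + x^6 + x^10 + x^11,
   a generator polynomial of the binary cyclic Golay code of length 23. *)
Definition golay_gen_coefs : seq nat := [:: 1; 0; 1; 0; 1; 1; 1; 0; 0; 0; 1; 1]%N.

(* Generator matrix (12 x 24, entries 0/1) of the extended binary Golay code:
   row i = x^i g(x) on coordinates 0..22, plus an overall parity bit at 23. *)
Definition golay_gen (i : 'I_12) (j : 'I_24) : nat :=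
  if (j < 23)%N then
    (if (i <= j)%N then nth 0%N golay_gen_coefs (j - i) else 0%N)
  else 1%N.

Definition golay (c : 'I_24 -> bool) : Prop :=
  exists a : 'I_12 -> nat,
    forall j : 'I_24, c j = odd (\sum_(i < 12) a i * golay_gen i j)%N.

(* Integer coordinates of the Leech lattice (scaled by sqrt 8):
   x = m*1 + 2c (mod 4) for a Golay codeword c, and sum x = 4m (mod 8). *)
Definition leech_int (x : 'I_24 -> int) : Prop :=
  exists (m : bool) (c : 'I_24 -> bool),
    golay c /\
    (forall i, (x i = (m%N + 2 * c i)%N%:Z %[mod 4])%Z) /\
    ((\sum_(i < 24) x i)%R = (4 * m)%N%:Z %[mod 8])%Z.

Section Leech.
Variable R : realType.

Definition dotv (u v : 'rV[R]_24) : R := (u *m v^T) 0 0.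

(* The Leech lattice in R^24, scaled so that minimal vectors have length 2. *)
Definition leech : set 'rV[R]_24 :=
  [set v | exists x : 'I_24 -> int,
           leech_int x /\ v = \row_i ((x i)%:~R / Num.sqrt 8)].

Definition minvecs : set 'rV[R]_24 :=
  [set v | leech v /\ dotv v v = 4].

Definition act (g : 'M[R]_24) (A : set 'rV[R]_24) : set 'rV[R]_24 :=
  (fun v => v *m g) @` A.

Definition Co0 : set 'M[R]_24 :=
  [set g | (forall v, dotv (v *m g) (v *m g) = dotv v v) /\ act g leech = leech].

Definition setcard (T : choiceType) (A : set T) : nat := #|` fset_set A|%fset.

(* U_n = S_1 u ... u S_n, with S_j = g_j S \ U_{j-1} *)
Fixpoint Useq (S : set 'rV[R]_24) (g : nat -> 'M[R]_24) (n : nat) : set 'rV[R]_24 :=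
  match n with
  | 0 => set0
  | n'.+1 => Useq S g n' `|` (act (g n'.+1) S `\` Useq S g n')
  end.

Definition Sseq (S : set 'rV[R]_24) (g : nat -> 'M[R]_24) (j : nat) : set 'rV[R]_24 :=
  act (g j) S `\` Useq S g j.-1.

(* E_k = E_g |gS n U_k|, g uniform in Co_0 *)
Definition Ek (S : set 'rV[R]_24) (g : nat -> 'M[R]_24) (k : nat) : R :=
  (\sum_(h \in Co0) ((setcard (act h S `&` Useq S g k))%:R : R)) / (setcard Co0)%:R.

Definition deltaf (S : set 'rV[R]_24) (g : nat -> 'M[R]_24) (k : nat) (h : 'M[R]_24) : R :=
  (setcard (act h S `&` Useq S g k))%:R - Ek S g k.

Definition Gminus (S : set 'rV[R]_24) (g : nat -> 'M[R]_24) (k : nat) : set 'M[R]_24 :=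
  [set h | Co0 h /\ deltaf S g k h < 0].

End Leech.

Definition floor2 (R : realType) (x : R) : R := (2 * Num.floor (x / 2))%:~R.
Definition ceil2 (R : realType) (x : R) : R := (2 * Num.ceil (x / 2))%:~R.

(* Every [|gS ∩ U_k|] is even: [S] and [U_k] are antipodal and avoid [0],
   so [x ↦ -x] is a fixed-point-free involution of [gS ∩ U_k].  Hence when
   [g ∉ G_-] the count is an even number [>= E_k], so [δ(g) >= ⌈E_k⌉₂ - E_k],
   while on [G_-] the hypothesis gives [δ(g) >= -(E_k - ⌊E_k⌋₂)].  Since [δ]
   has mean zero over [Co_0] and [⌈E_k⌉₂ - ⌊E_k⌋₂ <= 2], averaging gives the
   bound. *)
From HB Require Import structures.
From mathcomp Require Import all_boot all_order all_algebra.
From mathcomp Require Import finmap.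
From mathcomp Require Import all_classical all_reals.
From mathcomp Require Import lra.
Set Implicit Arguments. Unset Strict Implicit.
Import Order.TTheory GRing.Theory Num.Theory.
Local Open Scope classical_set_scope.
Local Open Scope ring_scope.

Lemma oppv_eq (R : numFieldType) (V : lmodType R) (x : V) : (- x == x) = (x == 0).
Proof.
by rewrite eq_sym -addr_eq0 -mulr2n -scaler_nat scaler_eq0 pnatr_eq0.
Qed.

Lemma even_card_fixfree_involution (T : choiceType) (f : T -> T) (A : {fset T}) :
  involutive f -> {in A, forall x, f x \in A} -> {in A, forall x, f x != x} ->
  ~~ odd #|` A|%fset.
Proof.
move=> fK; have [n] := ubnP #|` A|%fset; elim: n A => // n IHn A ltAn fA fxx.
have [-> | [x xA]] := fset_0Vmem A; first by rewrite cardfs0.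
have fxA1 : f x \in (A `\ x)%fset by rewrite !inE fxx ?fA.
set B := ((A `\ x) `\ f x)%fset.
have cardA : #|` A|%fset = #|` B|%fset.+2.
  by rewrite (cardfsD1 x) xA (cardfsD1 (f x)) fxA1.
rewrite cardA /= negbK; apply: IHn => [|y|y].
- by move: ltAn; rewrite cardA ltnS => /ltnW.
- rewrite !inE => /and3P[yfx yx yA]; rewrite fA // andbT.
  by rewrite (inj_eq (can_inj fK)) (can2_eq fK fK) yx yfx.
- by rewrite !inE => /and3P[_ _ /fxx].
Qed.

Lemma setcard_infinite (T : choiceType) (A : set T) :
  ~ finite_set A -> setcard A = 0%N.
Proof. by rewrite /setcard /fset_set; case: pselect. Qed.

Lemma even_setcard_fixfree_involution (T : choiceType) (f : T -> T) (A : set T) :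
  involutive f -> (forall x, A x -> A (f x)) -> (forall x, A x -> f x != x) ->
  ~~ odd (setcard A).
Proof.
move=> fK fA fxx; have [finA | /setcard_infinite -> //] := pselect (finite_set A).
apply: even_card_fixfree_involution fK _ _ => x; rewrite in_fset_set // inE.
- by move/fA; rewrite in_fset_set // inE.
- exact: fxx.
Qed.

Definition antipodal (V : zmodType) (A : set V) := forall x, A x -> A (- x).

Lemma even_setcard_antipodal (R : numFieldType) (V : lmodType R) (A : set V) :
  antipodal A -> ~ A 0 -> ~~ odd (setcard A).
Proof.
move=> NA A0; apply: even_setcard_fixfree_involution opprK NA _ => x Ax.
by rewrite oppv_eq; apply: contraPneq A0 => <-.
Qed.

Lemma antipodalI (V : zmodType) (A B : set V) :
  antipodal A -> antipodal B -> antipodal (A `&` B).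
Proof. by move=> NA NB x [/NA Ax /NB Bx]. Qed.

Lemma antipodal_image (V : zmodType) (A : set V) :
  (fun x => - x) @` A = A -> antipodal A.
Proof. by move=> NA x Ax; rewrite -NA; exists x. Qed.

Lemma setcard_setIpred (T : choiceType) (A : set T) (P : pred T) :
  finite_set A -> setcard [set x | A x /\ P x] = count P (fset_set A).
Proof.
move=> finA; rewrite /setcard -sum1_count big_fset_condE -card_fset_sum1.
congr (#|` _|)%fset; apply/fsetP => x; rewrite !inE in_fset_set //; last first.
  by apply: sub_finite_set finA => y [].
rewrite in_fset_set //; apply/idP/andP => [/set_mem[Ax Px] | [/set_mem Ax Px]].
  by split=> //; apply: mem_set.
exact: mem_set.
Qed.

Lemma sumr_const_count (V : nmodType) (T : Type) (s : seq T) (P : pred T) (c : V) :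
  \sum_(h <- s | P h) c = c *+ count P s.
Proof. by rewrite -sum1_count -sumrMnr. Qed.

Lemma sumr_sub_mean (R : numFieldType) (T : Type) (s : seq T) (c : T -> R) :
  \sum_(h <- s) (c h - (\sum_(h <- s) c h) / (size s)%:R) = 0.
Proof.
case: s => [|x s]; first by rewrite big_nil.
by rewrite sumrB sumr_const_count count_predT -[_ *+ size _]mulr_natr divfK ?subrr ?pnatr_eq0.
Qed.

Lemma mean0_count_bound (R : realDomainType) (T : eqType) (s : seq T) (d : T -> R)
    (b : pred T) (M D : R) :
  \sum_(h <- s) d h = 0 ->
  {in s, forall h, b h -> - M <= d h} -> {in s, forall h, ~~ b h -> D <= d h} ->
  (size s)%:R * D <= (count b s)%:R * (M + D).
Proof.
rewrite (bigID b) /= => sum0 lbM lbD.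
have lbMsum : (count b s)%:R * - M <= \sum_(h <- s | b h) d h.
  rewrite mulr_natl -sumr_const_count big_seq_cond [leRHS]big_seq_cond.
  by apply: ler_sum => h /andP[]; exact: lbM.
have lbDsum : (count (predC b) s)%:R * D <= \sum_(h <- s | ~~ b h) d h.
  rewrite mulr_natl -sumr_const_count big_seq_cond [leRHS]big_seq_cond.
  by apply: ler_sum => h /andP[]; exact: lbD.
rewrite -(count_predC b s) natrD; lra.
Qed.

Lemma ceil2_le_even (R : realType) (x : R) (n : nat) :
  ~~ odd n -> x <= n%:R -> ceil2 x <= n%:R.
Proof.
move=> /even_halfK en xn.
have -> : n%:R = (2 * (n./2)%:Z)%:~R :> R by rewrite -[in LHS]en -muln2 mulnC natrM intrM.
by rewrite ler_int ler_pM2l // ceil_le_int ler_pdivrMr // -[_%:~R]/(n./2)%:R -natrM muln2 en.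
Qed.

Lemma ceil2_sub_floor2 (R : realType) (x : R) : ceil2 x - floor2 x <= 2.
Proof.
rewrite /ceil2 /floor2 ceil_floor mulrDr intrD addrC addKr.
by case: (_ \isn't a _).
Qed.

Section Leech.
Variable R : realType.
Implicit Types (S : set 'rV[R]_24) (g : nat -> 'M[R]_24) (h : 'M[R]_24).

Lemma antipodal_act h S : antipodal S -> antipodal (act h S).
Proof. by move=> NS _ [x Sx <-]; exists (- x); [exact: NS | rewrite mulNmx]. Qed.

Lemma antipodal_Useq S g n : antipodal S -> antipodal (Useq S g n).
Proof.
move=> NS; elim: n => [|n IHn] //= x [Ux | [gSx Ux]]; first by left; apply: IHn.
by right; split; [exact: antipodal_act | move=> /IHn; rewrite opprK].
Qed.

Lemma act_minvecs_neq0 h S :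
  (forall v, dotv (v *m h) (v *m h) = dotv v v) -> S `<=` @minvecs R ->
  ~ act h S 0.
Proof.
move=> hiso Smin [x Sx hx0]; have := hiso x; rewrite hx0 (proj2 (Smin x Sx)).
by rewrite /dotv mul0mx mxE => /eqP; rewrite eq_sym pnatr_eq0.
Qed.

Lemma even_setcard_actI_Useq S g k h :
  S `<=` @minvecs R -> antipodal S -> Co0 h ->
  ~~ odd (setcard (act h S `&` Useq S g k)).
Proof.
move=> Smin NS [hiso _]; apply: even_setcard_antipodal.
- by apply: antipodalI; [exact: antipodal_act | exact: antipodal_Useq].
- by move=> [/(act_minvecs_neq0 hiso Smin)].
Qed.

End Leech.

Theorem lemma4p9 (R : realType) (S : set 'rV[R]_24) (k : nat) (g : nat -> 'M[R]_24) :
  S `<=` @minvecs R ->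
  (fun x => - x) @` S = S ->
  (forall x y, S x -> S y -> x <> y -> dotv x y <= 1) ->
  (1 <= k)%N ->
  g 1%N = 1%:M ->
  (forall j, (2 <= j <= k)%N -> @Co0 R (g j)) ->
  (forall j, (1 <= j <= k)%N ->
     ((setcard S)%:R : R) * (1 - (\sum_(1 <= i < j) ((setcard (Sseq S g i))%:R : R)) / (setcard (@minvecs R))%:R)
       <= (setcard (Sseq S g j))%:R) ->
  (exists2 h, Gminus S g k h & `|deltaf S g k h| = Ek S g k - floor2 (Ek S g k)) ->
  (forall h, Gminus S g k h -> `|deltaf S g k h| <= Ek S g k - floor2 (Ek S g k)) ->
  (setcard (@Co0 R))%:R / 2 * (ceil2 (Ek S g k) - Ek S g k) <= (setcard (Gminus S g k))%:R.
Proof.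
move=> Smin /antipodal_image NS _ _ _ _ _ _ dev_le.
have [finC | /setcard_infinite -> ] := pselect (finite_set (@Co0 R)); last first.
  by rewrite !mul0r.
set X := fset_set (@Co0 R); set E := Ek S g k.
have X_Co0 h : h \in X -> Co0 h by rewrite in_fset_set // inE.
have sum_dev : \sum_(h <- X) deltaf S g k h = 0.
  by rewrite /deltaf /E /Ek fsbig_finite // sumr_sub_mean.
have neg_dev : {in X, forall h, deltaf S g k h < 0 -> - (E - floor2 E) <= deltaf S g k h}.
  by move=> h /X_Co0 Ch neg; rewrite lerNl -ltr0_norm //; exact: dev_le.
have nonneg_dev : {in X, forall h, ~~ (deltaf S g k h < 0) -> ceil2 E - E <= deltaf S g k h}.
  move=> h /X_Co0 Ch; rewrite -leNgt subr_ge0 lerD2r; apply: ceil2_le_even.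
  exact: even_setcard_actI_Useq.
have := mean0_count_bound sum_dev neg_dev nonneg_dev.
rewrite -setcard_setIpred // -/(Gminus S g k) -[size X]/(setcard (@Co0 R)).
have := ceil2_sub_floor2 E; have := ler0n R (setcard (Gminus S g k)).
set N := (setcard (@Co0 R))%:R; set m := (setcard (Gminus S g k))%:R; nra.
Qed.
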